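(* Let $f_{r,k}(x)=x^2\exp(r-x)+k$. For every $k\in[0,2)$ there exists an interval $[r_1,r_2]$ of positive $r$-values such that for every $r\in[r_1,r_2]$ the map $f_{r,k}$ has an attracting fixed point $x_f>2$. *)

From Stdlib Require Import Reals.
Open Scope R_scope.

Definition f_rk (r k : R) (x : R) : R := x ^ 2 * exp (r - x) + k.

Definition attracting_fixed_point (g : R -> R) (x : R) : Prop :=
  g x = x /\ exists d : R, derivable_pt_lim g x d /\ Rabs d < 1.

(* A point z > k is a fixed point of f_{r,k} exactly when exp (r - z) = (z - k) / z^2, i.e. when
   r = z + ln ((z - k) / z^2); at such a point f'(z) = (2 - z) (z - k) / z, whose modulus is below 1
   as soon as 1 < z < 3.  The parameter z + ln ((z - k) / z^2) increases with z on z >= 2, and is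
   positive at z = 14/5 because exp (14/5) > 49/5.  So every r between its values at 14/5 and 29/10
   has, by the intermediate value theorem, an attracting fixed point in [14/5, 29/10]. *)
From Stdlib Require Import Reals Lra Psatz.
From Coquelicot Require Import Coquelicot.
Open Scope R_scope.

Definition fixing_parameter (k z : R) : R := z + ln ((z - k) / z ^ 2).

Lemma exp_le_exp (x y : R) : x <= y -> exp x <= exp y.
Proof.
  intros [lt_xy | ->]; [left; apply exp_increasing; exact lt_xy | apply Rle_refl].
Qed.

Lemma ln_le_sub1 (y : R) : 0 < y -> ln y <= y - 1.
Proof.
  intros y_pos. pose proof (exp_ineq1_le (ln y)) as H.
  rewrite exp_ln in H by exact y_pos. lra.
Qed.

Lemma derivable_pt_lim_f_rk (r k x : R) :
  derivable_pt_lim (f_rk r k) x ((2 * x - x ^ 2) * exp (r - x)).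
Proof.
  apply is_derive_Reals. unfold f_rk.
  auto_derive; [exact I | unfold Rminus; ring].
Qed.

Lemma continuity_f_rk (r k : R) : continuity (f_rk r k).
Proof.
  intro x. apply derivable_continuous_pt.
  exists ((2 * x - x ^ 2) * exp (r - x)). apply derivable_pt_lim_f_rk.
Qed.

Section FixingParameter.

Variables k z : R.
Hypothesis z_pos : 0 < z.
Hypothesis k_lt_z : k < z.

Lemma exp_fixing_parameter_sub : exp (fixing_parameter k z - z) = (z - k) / z ^ 2.
Proof.
  unfold fixing_parameter. replace (z + _ - z) with (ln ((z - k) / z ^ 2)) by ring.
  apply exp_ln, Rdiv_lt_0_compat; [lra | apply pow_lt; exact z_pos].
Qed.

Lemma f_rk_sub_id (r : R) :
  f_rk r k z - z = z ^ 2 * (exp (r - z) - exp (fixing_parameter k z - z)).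
Proof.
  rewrite exp_fixing_parameter_sub. unfold f_rk. field. lra.
Qed.

Lemma fixing_parameter_pos : z ^ 2 < exp z * (z - k) -> 0 < fixing_parameter k z.
Proof.
  intros lt_z2. apply exp_lt_inv. rewrite exp_0.
  replace (fixing_parameter k z) with (z + (fixing_parameter k z - z)) by ring.
  rewrite exp_plus, exp_fixing_parameter_sub.
  apply (Rmult_lt_reg_r (z ^ 2)); [apply pow_lt; exact z_pos |].
  field_simplify; lra.
Qed.

Lemma ln_div_sq : ln ((z - k) / z ^ 2) = ln (z - k) - 2 * ln z.
Proof.
  rewrite ln_div, ln_pow by (try apply pow_lt; lra). simpl. ring.
Qed.

End FixingParameter.

Lemma fixing_parameter_lt (k a b : R) :
  k < a -> 2 <= a -> a < b -> fixing_parameter k a < fixing_parameter k b.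
Proof.
  intros k_lt_a a_ge2 a_lt_b. unfold fixing_parameter.
  rewrite !ln_div_sq by lra.
  assert (ln_sub_lt : ln (a - k) < ln (b - k)) by (apply ln_increasing; lra).
  assert (ln_ratio : ln b - ln a <= (b - a) / a).
  { rewrite <- ln_div by lra.
    replace ((b - a) / a) with (b / a - 1) by (field; lra).
    apply ln_le_sub1, Rdiv_lt_0_compat; lra. }
  assert (two_ratio : 2 * ((b - a) / a) <= b - a).
  { apply (Rmult_le_reg_r a); [lra |]. field_simplify; nra. }
  lra.
Qed.

Lemma f_rk_fixed_point_between (r k a b : R) :
  0 < a -> k < a -> a <= b ->
  fixing_parameter k a <= r <= fixing_parameter k b ->
  exists z, a <= z <= b /\ f_rk r k z = z.
Proof.
  intros a_pos k_lt_a a_le_b [ge_ra le_rb].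
  pose (g := fun x => f_rk r k x - x).
  assert (ga_nonneg : 0 <= g a).
  { unfold g. rewrite f_rk_sub_id by lra.
    pose proof (exp_le_exp (fixing_parameter k a - a) (r - a) ltac:(lra)).
    apply Rmult_le_pos; [apply pow_le | ]; lra. }
  assert (gb_nonpos : g b <= 0).
  { unfold g. rewrite f_rk_sub_id by lra.
    pose proof (exp_le_exp (r - b) (fixing_parameter k b - b) ltac:(lra)).
    apply Rmult_le_0_l; [apply pow_le | ]; lra. }
  assert (g_cont : continuity g).
  { apply continuity_minus; [apply continuity_f_rk |].
    apply derivable_continuous, derivable_id. }
  destruct (IVT_cor g a b g_cont a_le_b) as [z [z_in gz]]; [nra |].
  exists z. split; [exact z_in | unfold g in gz; lra].
Qed.

Lemma f_rk_fixed_point_attracting (r k z : R) :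
  0 <= k < z -> 1 < z < 3 -> f_rk r k z = z -> attracting_fixed_point (f_rk r k) z.
Proof.
  intros [k_nonneg k_lt_z] [z_gt1 z_lt3] fixed. split; [exact fixed |].
  exists ((2 * z - z ^ 2) * exp (r - z)). split; [apply derivable_pt_lim_f_rk |].
  pose proof (exp_pos (r - z)) as e_pos. set (e := exp (r - z)) in *.
  assert (z2e : z ^ 2 * e = z - k) by (unfold f_rk in fixed; fold e in fixed; lra).
  (* z e = (z - k) / z lies in (0, 1], and f'(z) = (2 - z) z e. *)
  assert (ze_le1 : z * e <= 1).
  { apply (Rmult_le_reg_l z); [lra |]. simpl in z2e. nra. }
  assert (ze_pos : 0 < z * e) by nra.
  apply Rabs_def1; nra.
Qed.

Lemma exp_14_5_gt : 49 / 5 < exp (14 / 5).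
Proof.
  eapply Rlt_le_trans; [| apply (exp_ge_taylor (14 / 5) 3); lra].
  simpl. lra.
Qed.

Theorem corollary3p5 :
  forall k : R, 0 <= k < 2 ->
  exists r1 r2 : R, 0 < r1 /\ r1 < r2 /\
    forall r : R, r1 <= r <= r2 ->
      exists xf : R, 2 < xf /\ attracting_fixed_point (f_rk r k) xf.
Proof.
  intros k [k_nonneg k_lt2].
  exists (fixing_parameter k (14 / 5)), (fixing_parameter k (29 / 10)).
  split; [| split].
  - apply fixing_parameter_pos; [lra | lra |].
    pose proof exp_14_5_gt. nra.
  - apply fixing_parameter_lt; lra.
  - intros r r_between.
    destruct (f_rk_fixed_point_between r k (14 / 5) (29 / 10) ltac:(lra) ltac:(lra)
                ltac:(lra) r_between) as [z [z_in fixed]].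
    exists z. split; [lra |].
    apply f_rk_fixed_point_attracting; [lra | lra | exact fixed].
Qed.
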